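(* Let $\mathcal{C}$ be a category, let $\mathcal{D}$ be a full pro-reflective subcategory of $\mathcal{C}$, and let $J$ be a directed partially ordered set. Let $X,Y\in Ob\,\mathcal{C}$, let $\boldsymbol{q}=(q_\mu):Y\to\boldsymbol{Y}=(Y_\mu,q_{\mu\mu'},M)$ be a $\mathcal{D}$-expansion of $Y$, and let $(H_\mu)_{\mu\in M}$ be a family of $J$-shape morphisms $H_\mu:X\to Y_\mu$ with $S^J(q_{\mu\mu'})H_{\mu'}=H_\mu$ for all $\mu\le\mu'$. Then there exists a unique morphism $F:X\to Y$ of $Sh^J_{(\mathcal{C},\mathcal{D})}$ such that $H_\mu=S^J(q_\mu)F$ for every $\mu\in M$.
   Context: An inverse system $\boldsymbol{X}=(X_\lambda,p_{\lambda\lambda'},\Lambda)$ in a category $\mathcal{C}$: $\Lambda$ a directed preordered set, objects $X_\lambda$, morphisms $p_{\lambda\lambda'}:X_{\lambda'}\to X_\lambda$ ($\lambda\le\lambda'$) with $p_{\lambda\lambda}=1$, $p_{\lambda\lambda'}p_{\lambda'\lambda''}=p_{\lambda\lambda''}$. For a directed partially ordered set $J$ and inverse systems $\boldsymbol{X}$, $\boldsymbol{Y}=(Y_\mu,q_{\mu\mu'},M)$, a $J$-morphism $(f,f^j_\mu):\boldsymbol{X}\to\boldsymbol{Y}$ consists of a function $f:M\to\Lambda$ and $\mathcal{C}$-morphisms $f^j_\mu:X_{f(\mu)}\to Y_\mu$ ($\mu\in M$, $j\in J$) such that for all $\mu\le\mu'$ there exist $\lambda\ge f(\mu),f(\mu')$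 and $j_0\in J$ with $f^{j'}_\mu p_{f(\mu)\lambda}=q_{\mu\mu'}f^{j'}_{\mu'}p_{f(\mu')\lambda}$ for all $j'\ge j_0$. Composition: $(g,g^j_\nu)(f,f^j_\mu)=(fg,g^j_\nu f^j_{g(\nu)})$; identity $(1_\Lambda,1_{X_\lambda})$. Two $J$-morphisms are equivalent if for every $\mu$ there exist $\lambda\ge f(\mu),f'(\mu)$ and $j_0$ with $f^{j'}_\mu p_{f(\mu)\lambda}=f'^{j'}_\mu p_{f'(\mu)\lambda}$ for all $j'\ge j_0$; $pro^J$-$\mathcal{C}$ is the resulting quotient category. For $J=\{1\}$ this is $pro$-$\mathcal{C}$; $\underline{I}:pro$-$\mathcal{C}\to pro^J$-$\mathcal{C}$ sends $[(f,f_\mu)]$ to $[(f,f^j_\mu=f_\mu)]$. For a full subcategory $\mathcal{D}\subseteq\mathcal{C}$ and $X\in Ob\,\mathcal{C}$, a $\mathcal{D}$-expansion of $X$ is a family $\boldsymbol{p}=(p_\lambda:X\to X_\lambda)$ into an inverse system $\boldsymbol{X}$ in $\mathcal{D}$ with $p_{\lambda\lambda'}p_{\lambda'}=p_\lambda$ such that (E1) every $\mathcal{C}$-morphism $h:X\to P$, $P\in Ob\,\mathcal{D}$, factors as $gp_\lambda$, and (E2) $gp_\lambda=g'p_\lambda$ implies $gp_{\lambda\lambda'}=g'p_{\lambda\lambda'}$ for some $\lambda'\ge\lambda$. $\mathcal{D}$ is pro-reflective if every object has a $\mathcal{D}$-expansion. The $J$-shape category $Sh^J_{(\mathcal{C},\mathcal{D})}$: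 objects of $\mathcal{C}$; with chosen $\mathcal{D}$-expansions $\boldsymbol{p}:X\to\boldsymbol{X}$, $\boldsymbol{q}:Y\to\boldsymbol{Y}$, morphisms $X\to Y$ are morphisms $\boldsymbol{X}\to\boldsymbol{Y}$ of $pro^J$-$\mathcal{D}$, identified across different choices of expansions via $\underline{I}$ of the canonical $pro$-$\mathcal{D}$ isomorphisms between expansions; composition of representatives. $S^J:\mathcal{C}\to Sh^J_{(\mathcal{C},\mathcal{D})}$ is the identity on objects and sends $g:X\to Y$ to the class of $\underline{I}(\boldsymbol{g})$, where $\boldsymbol{g}$ is the unique $pro$-$\mathcal{D}$ morphism with $\boldsymbol{gp}=\boldsymbol{q}g$. *)

From Stdlib Require Import ClassicalEpsilon.

Record Category := {
  Ob :> Type;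
  Hom : Ob -> Ob -> Type;
  comp : forall a b c : Ob, Hom b c -> Hom a b -> Hom a c;
  idm : forall a : Ob, Hom a a;
  comp_assoc : forall a b c d (f : Hom a b) (g : Hom b c) (h : Hom c d),
      comp a c d h (comp a b c g f) = comp a b d (comp b c d h g) f;
  comp_id_l : forall a b (f : Hom a b), comp a b b (idm b) f = f;
  comp_id_r : forall a b (f : Hom a b), comp a a b f (idm a) = f
}.
Arguments Hom {c} _ _ : rename.
Arguments comp {c a b c0} _ _ : rename.
Arguments idm {c} _ : rename.

(** A full subcategory D of C is given by a predicate [inD] on objects
    (hom-sets of D are those of C). *)

Definition directed_preorder {I : Type} (le : I -> I -> Prop) : Prop :=
  (forall i, le i i) /\
  (forall i j k, le i j -> le j k -> le i k) /\
  (forall i j, exists k, le i k /\ le j k).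

Definition directed_poset {J : Type} (le : J -> J -> Prop) : Prop :=
  directed_preorder le /\
  (forall i j, le i j -> le j i -> i = j) /\
  inhabited J.

Record isys (C : Category) := {
  idx : Type;
  ile : idx -> idx -> Prop;
  ile_dir : directed_preorder ile;
  iobj : idx -> Ob C;
  bond : forall l l' : idx, ile l l' -> Hom (iobj l') (iobj l);
  bond_id : forall l (h : ile l l), bond l l h = idm (iobj l);
  bond_comp : forall l l' l'' (h1 : ile l l') (h2 : ile l' l'') (h3 : ile l l''),
      comp (bond l l' h1) (bond l' l'' h2) = bond l l'' h3
}.
Arguments idx {C} _.
Arguments ile {C} _ _ _.
Arguments iobj {C} _ _.
Arguments bond {C} _ {l l'} _.

Record Jraw {C : Category} (J : Type) (X Y : isys C) := {
  jf : idx Y -> idx X;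
  jm : forall mu : idx Y, J -> Hom (iobj X (jf mu)) (iobj Y mu)
}.
Arguments jf {C J X Y} _ _.
Arguments jm {C J X Y} _ _ _.

Definition is_Jmor {C : Category} {J : Type} (Jle : J -> J -> Prop)
    {X Y : isys C} (F : Jraw J X Y) : Prop :=
  forall (mu mu' : idx Y) (h : ile Y mu mu'),
    exists (lam : idx X) (h1 : ile X (jf F mu) lam) (h2 : ile X (jf F mu') lam)
           (j0 : J),
      forall j', Jle j0 j' ->
        comp (jm F mu j') (bond X h1) =
        comp (bond Y h) (comp (jm F mu' j') (bond X h2)).

Definition Jequiv {C : Category} {J : Type} (Jle : J -> J -> Prop)
    {X Y : isys C} (F G : Jraw J X Y) : Prop :=
  forall mu : idx Y,
    exists (lam : idx X) (h1 : ile X (jf F mu) lam) (h2 : ile X (jf G mu) lam)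
           (j0 : J),
      forall j', Jle j0 j' ->
        comp (jm F mu j') (bond X h1) = comp (jm G mu j') (bond X h2).

Definition Jcomp {C : Category} {J : Type} {X Y Z : isys C}
    (G : Jraw J Y Z) (F : Jraw J X Y) : Jraw J X Z :=
  {| jf := fun nu => jf F (jf G nu);
     jm := fun nu j => comp (jm G nu j) (jm F (jf G nu) j) |}.

Record expansion (C : Category) (inD : Ob C -> Prop) (X : Ob C) := {
  esys : isys C;
  esys_D : forall l, inD (iobj esys l);
  emap : forall l, Hom X (iobj esys l);
  emap_comm : forall l l' (h : ile esys l l'), comp (bond esys h) (emap l') = emap l;
  exp_E1 : forall (P : Ob C) (h : Hom X P), inD P ->
      exists s : {l : idx esys & Hom (iobj esys l) P},
        h = comp (projT2 s) (emap (projT1 s));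
  exp_E2 : forall (l : idx esys) (P : Ob C) (g g' : Hom (iobj esys l) P), inD P ->
      comp g (emap l) = comp g' (emap l) ->
      exists (l' : idx esys) (h : ile esys l l'),
        comp g (bond esys h) = comp g' (bond esys h)
}.
Arguments esys {C inD X} _.
Arguments esys_D {C inD X} _ _.
Arguments emap {C inD X} _ _.

(** * The J-shape category Sh^J_(C,D), built from a choice [E] of a
    D-expansion for every object (such a choice exists iff D is
    pro-reflective).  A morphism X -> Y is a J-morphism
    esys (E X) -> esys (E Y); equality of shape morphisms is [Jequiv]. *)
Definition ShHom {C : Category} {inD : Ob C -> Prop} {J : Type}
    (Jle : J -> J -> Prop) (E : forall X : Ob C, expansion C inD X) (X Y : Ob C) :=
  { F : Jraw J (esys (E X)) (esys (E Y)) | is_Jmor Jle F }.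

(** S^J(g): the class of I(g), where g : X -> Y is represented by a
    family (f, g_mu) with g_mu p_{f(mu)} = q_mu g (given by (E1)). *)
Definition SJ_choice {C : Category} {inD : Ob C -> Prop}
    (E : forall X : Ob C, expansion C inD X) {X Y : Ob C} (g : Hom X Y)
    (mu : idx (esys (E Y))) :
    {l : idx (esys (E X)) & Hom (iobj (esys (E X)) l) (iobj (esys (E Y)) mu)} :=
  proj1_sig (constructive_indefinite_description _
    (exp_E1 _ _ _ (E X) _ (comp (emap (E Y) mu) g) (esys_D (E Y) mu))).

Definition SJ {C : Category} {inD : Ob C -> Prop} {J : Type}
    (E : forall X : Ob C, expansion C inD X) {X Y : Ob C} (g : Hom X Y) :
    Jraw J (esys (E X)) (esys (E Y)) :=
  {| jf := fun mu => projT1 (SJ_choice E g mu);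
     jm := fun mu _ => projT2 (SJ_choice E g mu) |}.

(* A J-morphism G from an inverse system P into a D-expansion e of an object Z
   induces, for every W in D, a map from C(Z, W) to J-cones from P to W (an
   index l of P with a J-indexed family P_l -> W, up to eventual equality):
   factor f = a e_k by (E1) and take a G_k.  By (E2) this does not depend on
   the factorisation; it is natural in W and determines G.  Applied to the
   H_mu, and using (E1), (E2) for q, the compatible family (H_mu) induces such
   a map on C(Y, W), hence a J-morphism F into the chosen expansion of Y with
   S^J(q_mu) F = H_mu.  Any other solution induces the same map on C(Y, W),
   since every f : Y -> W factors through some q_mu, so it equals F. *)

From Stdlib Require Import ClassicalEpsilon Setoid Morphisms.

(* Eta for [cone] makes [component (Jraw_of_cones c)] convertible to [c]. *)
Set Primitive Projections.

Lemma ile_refl {C : Category} (Q : isys C) l : ile Q l l.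
Proof. exact (proj1 (ile_dir C Q) l). Qed.

Lemma ile_trans {C : Category} (Q : isys C) l l' l'' :
  ile Q l l' -> ile Q l' l'' -> ile Q l l''.
Proof. exact (proj1 (proj2 (ile_dir C Q)) l l' l''). Qed.

Lemma ile_directed {C : Category} (Q : isys C) l l' :
  exists l'', ile Q l l'' /\ ile Q l' l''.
Proof. exact (proj2 (proj2 (ile_dir C Q)) l l'). Qed.

Lemma bond_irr {C : Category} (Q : isys C) l l' (h h' : ile Q l l') :
  bond Q h = bond Q h'.
Proof.
  rewrite <- (bond_comp C Q l l' l' h (ile_refl Q l') h'), bond_id.
  symmetry; apply comp_id_r.
Qed.

Lemma emap_coequalize {C : Category} {inD : Ob C -> Prop} {B : Ob C}
    (e : expansion C inD B) {W : Ob C} (hW : inD W) k k'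
    (a : Hom (iobj (esys e) k) W) (b : Hom (iobj (esys e) k') W) :
  comp a (emap e k) = comp b (emap e k') ->
  exists k'' (h : ile (esys e) k k'') (h' : ile (esys e) k' k''),
    comp a (bond (esys e) h) = comp b (bond (esys e) h').
Proof.
  intros Hab.
  destruct (ile_directed (esys e) k k') as (k1 & h1 & h1').
  assert (Hk1 : comp (comp a (bond _ h1)) (emap e k1)
              = comp (comp b (bond _ h1')) (emap e k1)).
  { rewrite <- !comp_assoc, !emap_comm; exact Hab. }
  destruct (exp_E2 _ _ _ e k1 W _ _ hW Hk1) as (k'' & h2 & Hk'').
  exists k'', (ile_trans _ _ _ _ h1 h2), (ile_trans _ _ _ _ h1' h2).
  rewrite <- (bond_comp C _ _ _ _ h1 h2), <- (bond_comp C _ _ _ _ h1' h2), !comp_assoc.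
  exact Hk''.
Qed.

Section Cones.

Context {C : Category} {J : Type} (Jle : J -> J -> Prop) (hJ : directed_poset Jle).
Context {inD : Ob C -> Prop} (P : isys C).

Record cone (W : Ob C) := Cone {
  cone_idx : idx P;
  cone_map : J -> Hom (iobj P cone_idx) W
}.
Arguments Cone {W} _ _.
Arguments cone_idx {W} _.
Arguments cone_map {W} _ _.

Definition cone_eq {W} (a b : cone W) : Prop :=
  exists lam (h1 : ile P (cone_idx a) lam) (h2 : ile P (cone_idx b) lam) (j0 : J),
    forall j, Jle j0 j ->
      comp (cone_map a j) (bond P h1) = comp (cone_map b j) (bond P h2).

Definition cone_post {W W'} (w : Hom W W') (a : cone W) : cone W' :=
  Cone (cone_idx a) (fun j => comp w (cone_map a j)).

Definition component {Q : isys C} (G : Jraw J P Q) (k : idx Q) : cone (iobj Q k) :=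
  Cone (jf G k) (jm G k).

Definition Jraw_of_cones {Q : isys C} (c : forall k, cone (iobj Q k)) : Jraw J P Q :=
  {| jf := fun k => cone_idx (c k); jm := fun k => cone_map (c k) |}.

Definition compatible (Q : isys C) (c : forall k, cone (iobj Q k)) : Prop :=
  forall k k' (h : ile Q k k'), cone_eq (c k) (cone_post (bond Q h) (c k')).

Lemma cone_eq_refl W (a : cone W) : cone_eq a a.
Proof.
  destruct (proj2 (proj2 hJ)) as [j0].
  exists (cone_idx a), (ile_refl P _), (ile_refl P _), j0; reflexivity.
Qed.

Lemma cone_eq_sym W (a b : cone W) : cone_eq a b -> cone_eq b a.
Proof.
  intros (lam & h1 & h2 & j0 & Hj).
  exists lam, h2, h1, j0; intros j hj; symmetry; auto.
Qed.

Lemma cone_eq_trans W (a b c : cone W) : cone_eq a b -> cone_eq b c -> cone_eq a c.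
Proof.
  intros (l1 & h1 & h2 & j1 & H1) (l2 & g1 & g2 & j2 & H2).
  pose proof hJ as ((_ & Jtrans & Jdir) & _).
  destruct (ile_directed P l1 l2) as (l & k1 & k2).
  destruct (Jdir j1 j2) as (j0 & i1 & i2).
  exists l, (ile_trans _ _ _ _ h1 k1), (ile_trans _ _ _ _ g2 k2), j0.
  intros j hj.
  rewrite <- (bond_comp C P _ _ _ h1 k1), <- (bond_comp C P _ _ _ g2 k2), !comp_assoc.
  rewrite (H1 j (Jtrans _ _ _ i1 hj)), <- (H2 j (Jtrans _ _ _ i2 hj)), <- !comp_assoc.
  rewrite (bond_comp C P _ _ _ h2 k1 (ile_trans _ _ _ _ h2 k1)),
          (bond_comp C P _ _ _ g1 k2 (ile_trans _ _ _ _ g1 k2)).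
  apply (f_equal (comp _)), bond_irr.
Qed.

#[local] Instance cone_eq_equivalence W : Equivalence (@cone_eq W).
Proof.
  split; [exact (cone_eq_refl W) | exact (cone_eq_sym W) | exact (cone_eq_trans W)].
Qed.

#[local] Instance cone_post_proper W W' :
  Proper (eq ==> cone_eq ==> cone_eq) (@cone_post W W').
Proof.
  intros w _ <- a b (lam & h1 & h2 & j0 & Hj).
  exists lam, h1, h2, j0; intros j hj; cbn.
  rewrite <- !comp_assoc; f_equal; auto.
Qed.

Lemma cone_post_comp W W' W'' (w : Hom W W') (w' : Hom W' W'') (a : cone W) :
  cone_eq (cone_post w' (cone_post w a)) (cone_post (comp w' w) a).
Proof.
  destruct (proj2 (proj2 hJ)) as [j0].
  exists (cone_idx a), (ile_refl P _), (ile_refl P _), j0; intros j _; cbn.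
  rewrite comp_assoc; reflexivity.
Qed.

Lemma cone_post_id W (a : cone W) : cone_eq (cone_post (idm W) a) a.
Proof.
  destruct (proj2 (proj2 hJ)) as [j0].
  exists (cone_idx a), (ile_refl P _), (ile_refl P _), j0; intros j _; cbn.
  rewrite comp_id_l; reflexivity.
Qed.

Lemma is_Jmor_compatible (Q : isys C) (G : Jraw J P Q) :
  is_Jmor Jle G <-> compatible Q (component G).
Proof.
  split; intros HG k k' h; destruct (HG k k' h) as (l & h1 & h2 & j0 & Hj);
    exists l, h1, h2, j0; intros j hj; rewrite Hj by exact hj.
  - apply comp_assoc.
  - symmetry; apply comp_assoc.
Qed.

Lemma Jequiv_sym (Q : isys C) (F G : Jraw J P Q) : Jequiv Jle F G -> Jequiv Jle G F.
Proof.
  intros HFG k; change (cone_eq (component G k) (component F k)).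
  symmetry; exact (HFG k).
Qed.

Section InducedCone.

Context {B : Ob C} (e : expansion C inD B) (c : forall k, cone (iobj (esys e) k)).
Hypothesis hc : compatible (esys e) c.

Definition induced_cone {W} (hW : inD W) (f : Hom B W) : cone W :=
  let s := proj1_sig (constructive_indefinite_description _ (exp_E1 _ _ _ e W f hW)) in
  cone_post (projT2 s) (c (projT1 s)).

Lemma compatible_factor {W} (hW : inD W) k k'
    (a : Hom (iobj (esys e) k) W) (b : Hom (iobj (esys e) k') W) :
  comp a (emap e k) = comp b (emap e k') ->
  cone_eq (cone_post a (c k)) (cone_post b (c k')).
Proof.
  intros Hab.
  destruct (emap_coequalize e hW k k' a b Hab) as (k'' & h & h' & Hk'').
  rewrite (hc _ _ h), (hc _ _ h'), !cone_post_comp, Hk''; reflexivity.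
Qed.

Lemma induced_cone_emap {W} (hW : inD W) (f : Hom B W) k (a : Hom (iobj (esys e) k) W) :
  f = comp a (emap e k) -> cone_eq (induced_cone hW f) (cone_post a (c k)).
Proof.
  intros ->; unfold induced_cone.
  destruct (constructive_indefinite_description _ _) as [[k0 a0] Hs]; cbn.
  apply (compatible_factor hW); symmetry; exact Hs.
Qed.

Lemma cone_eq_induced_emap k (hk : inD (iobj (esys e) k)) :
  cone_eq (c k) (induced_cone hk (emap e k)).
Proof.
  rewrite (induced_cone_emap hk _ k (idm _)), cone_post_id; [reflexivity |].
  symmetry; apply comp_id_l.
Qed.

Lemma induced_cone_post {W W'} (hW : inD W) (hW' : inD W') (w : Hom W W') (f : Hom B W) :
  cone_eq (induced_cone hW' (comp w f)) (cone_post w (induced_cone hW f)).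
Proof.
  destruct (exp_E1 _ _ _ e W f hW) as ([k a] & Hf); cbn in Hf.
  rewrite (induced_cone_emap hW f k a Hf), (induced_cone_emap hW' _ k (comp w a)).
  - symmetry; apply cone_post_comp.
  - rewrite Hf; apply comp_assoc.
Qed.

Lemma induced_cone_compatible (e' : expansion C inD B) :
  compatible (esys e') (fun k => induced_cone (esys_D e' k) (emap e' k)).
Proof.
  intros k k' h; cbn.
  rewrite <- (induced_cone_post (esys_D e' k')), emap_comm; reflexivity.
Qed.

End InducedCone.

Lemma induced_cone_transfer {B : Ob C} (e e' : expansion C inD B)
    (c : forall k, cone (iobj (esys e) k)) (hc : compatible (esys e) c)
    {W} (hW : inD W) (f : Hom B W) :
  cone_eq (induced_cone e' (fun k => induced_cone e c (esys_D e' k) (emap e' k)) hW f)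
          (induced_cone e c hW f).
Proof.
  destruct (exp_E1 _ _ _ e' W f hW) as ([k a] & Hf); cbn in Hf.
  rewrite (induced_cone_emap e' _ (induced_cone_compatible e c hc e') hW f k a Hf).
  rewrite <- (induced_cone_post e c hc (esys_D e' k) hW), <- Hf; reflexivity.
Qed.

Section ShapeMorphisms.

Variable E : forall Z : Ob C, expansion C inD Z.

Lemma SJ_choice_spec {Z Z' : Ob C} (g : Hom Z Z') k :
  comp (emap (E Z') k) g
  = comp (projT2 (SJ_choice E g k)) (emap (E Z) (projT1 (SJ_choice E g k))).
Proof.
  unfold SJ_choice; destruct (constructive_indefinite_description _ _) as [s Hs].
  exact Hs.
Qed.

Lemma component_SJ {Z Z' : Ob C} (g : Hom Z Z') (G : Jraw J P (esys (E Z)))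
    (hG : is_Jmor Jle G) k :
  cone_eq (component (Jcomp (SJ E g) G) k)
          (induced_cone (E Z) (component G) (esys_D (E Z') k) (comp (emap (E Z') k) g)).
Proof.
  symmetry.
  exact (induced_cone_emap _ _ (proj1 (is_Jmor_compatible _ G) hG) _ _
           (projT1 (SJ_choice E g k)) (projT2 (SJ_choice E g k)) (SJ_choice_spec g k)).
Qed.

Lemma induced_cone_SJ {Z Z' : Ob C} (g : Hom Z Z')
    (G : Jraw J P (esys (E Z'))) (G' : Jraw J P (esys (E Z)))
    (hG : is_Jmor Jle G) (hG' : is_Jmor Jle G')
    (hGG' : Jequiv Jle G (Jcomp (SJ E g) G'))
    {W} (hW hW' : inD W) (f : Hom Z' W) :
  cone_eq (induced_cone (E Z') (component G) hW f)
          (induced_cone (E Z) (component G') hW' (comp f g)).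
Proof.
  pose proof (proj1 (is_Jmor_compatible _ G) hG) as cG.
  destruct (exp_E1 _ _ _ (E Z') W f hW) as ([k a] & Hf); cbn in Hf.
  rewrite (induced_cone_emap _ _ cG hW f k a Hf).
  assert (HGk : cone_eq (component G k) (component (Jcomp (SJ E g) G') k))
    by exact (hGG' k).
  rewrite HGk, (component_SJ g G' hG' k).
  rewrite <- (induced_cone_post _ _ (proj1 (is_Jmor_compatible _ G') hG')), Hf, comp_assoc.
  reflexivity.
Qed.

Section Limit.

Context {Y : Ob C} (q : expansion C inD Y).
Variable H : forall mu, Jraw J P (esys (E (iobj (esys q) mu))).
Hypothesis hHm : forall mu, is_Jmor Jle (H mu).

Let H_compatible mu : compatible _ (component (H mu)) :=
  proj1 (is_Jmor_compatible _ (H mu)) (hHm mu).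

Lemma limit_component_factor (F : Jraw J P (esys (E Y))) (hF : is_Jmor Jle F)
    (hFH : forall mu, Jequiv Jle (H mu) (Jcomp (SJ E (emap q mu)) F))
    nu mu (u : Hom (iobj (esys q) mu) (iobj (esys (E Y)) nu)) :
  emap (E Y) nu = comp u (emap q mu) ->
  cone_eq (component F nu)
          (induced_cone (E _) (component (H mu)) (esys_D (E Y) nu) u).
Proof.
  intros Hu.
  rewrite (cone_eq_induced_emap _ _ (proj1 (is_Jmor_compatible _ F) hF) nu (esys_D _ nu)), Hu.
  symmetry; exact (induced_cone_SJ _ _ _ (hHm mu) hF (hFH mu) _ _ u).
Qed.

Lemma limit_unique (F F' : Jraw J P (esys (E Y)))
    (hF : is_Jmor Jle F) (hF' : is_Jmor Jle F')
    (hFH : forall mu, Jequiv Jle (H mu) (Jcomp (SJ E (emap q mu)) F))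
    (hF'H : forall mu, Jequiv Jle (H mu) (Jcomp (SJ E (emap q mu)) F')) :
  Jequiv Jle F F'.
Proof.
  intros nu; change (cone_eq (component F nu) (component F' nu)).
  destruct (exp_E1 _ _ _ q _ (emap (E Y) nu) (esys_D _ nu)) as ([mu u] & Hu); cbn in Hu.
  rewrite (limit_component_factor F hF hFH nu mu u Hu),
          (limit_component_factor F' hF' hF'H nu mu u Hu).
  reflexivity.
Qed.

Hypothesis hH : forall mu mu' (h : ile (esys q) mu mu'),
  Jequiv Jle (Jcomp (SJ E (bond (esys q) h)) (H mu')) (H mu).

Let R mu : cone (iobj (esys q) mu) :=
  induced_cone (E _) (component (H mu)) (esys_D q mu) (idm _).

Lemma R_compatible : compatible (esys q) R.
Proof.
  intros mu mu' h; unfold R.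
  rewrite (induced_cone_SJ (bond (esys q) h) (H mu) (H mu') (hHm mu) (hHm mu')
             (Jequiv_sym _ _ _ (hH mu mu' h)) _ (esys_D q mu) (idm _)).
  rewrite <- (induced_cone_post _ _ (H_compatible mu') (esys_D q mu') (esys_D q mu)),
          comp_id_l, comp_id_r.
  reflexivity.
Qed.

Lemma induced_cone_R mu {W} (hW hW' : inD W) (g : Hom (iobj (esys q) mu) W) :
  cone_eq (induced_cone q R hW (comp g (emap q mu)))
          (induced_cone (E _) (component (H mu)) hW' g).
Proof.
  rewrite (induced_cone_emap q R R_compatible hW _ mu g eq_refl); unfold R.
  rewrite <- (induced_cone_post _ _ (H_compatible mu) (esys_D q mu) hW'), comp_id_r.
  reflexivity.
Qed.

Lemma limit_exists :
  exists F : Jraw J P (esys (E Y)), is_Jmor Jle F /\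
    forall mu, Jequiv Jle (H mu) (Jcomp (SJ E (emap q mu)) F).
Proof.
  set (Fc := fun nu => induced_cone q R (esys_D (E Y) nu) (emap (E Y) nu)).
  assert (hF : is_Jmor Jle (Jraw_of_cones Fc)).
  { apply is_Jmor_compatible; exact (induced_cone_compatible q R R_compatible (E Y)). }
  exists (Jraw_of_cones Fc); split; [exact hF |].
  intros mu k.
  change (cone_eq (component (H mu) k)
                  (component (Jcomp (SJ E (emap q mu)) (Jraw_of_cones Fc)) k)).
  rewrite (component_SJ _ _ hF k).
  change (component (Jraw_of_cones Fc)) with Fc; subst Fc.
  rewrite (induced_cone_transfer q (E Y) R R_compatible), (induced_cone_R mu _ (esys_D _ k)).
  apply cone_eq_induced_emap, H_compatible.
Qed.

End Limit.
End ShapeMorphisms.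
End Cones.

Theorem lemma9 (C : Category) (inD : Ob C -> Prop)
    (J : Type) (Jle : J -> J -> Prop) (hJ : directed_poset Jle)
    (E : forall X : Ob C, expansion C inD X)
    (X Y : Ob C) (q : expansion C inD Y)
    (H : forall mu : idx (esys q), ShHom Jle E X (iobj (esys q) mu))
    (hH : forall (mu mu' : idx (esys q)) (h : ile (esys q) mu mu'),
        Jequiv Jle (Jcomp (SJ E (bond (esys q) h)) (proj1_sig (H mu')))
                   (proj1_sig (H mu))) :
  exists F : ShHom Jle E X Y,
    (forall mu : idx (esys q),
        Jequiv Jle (proj1_sig (H mu)) (Jcomp (SJ E (emap q mu)) (proj1_sig F))) /\
    (forall F' : ShHom Jle E X Y,
        (forall mu : idx (esys q),
            Jequiv Jle (proj1_sig (H mu)) (Jcomp (SJ E (emap q mu)) (proj1_sig F'))) ->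
        Jequiv Jle (proj1_sig F) (proj1_sig F')).
Proof.
  pose (hHm mu := proj2_sig (H mu)).
  destruct (limit_exists Jle hJ (esys (E X)) E q _ hHm hH) as (F & hF & hFH).
  exists (exist _ F hF); split; [exact hFH |].
  intros [F' hF'] hF'H.
  exact (limit_unique Jle hJ (esys (E X)) E q _ hHm F F' hF hF' hFH hF'H).
Qed.
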